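(* Let $d$ and $t$ be integers with $d \geq 3t-5$ and $t \geq 4$. Then every edge-coloring of $W_d$ using at least $\left\lfloor \frac{2t-5}{t-2} d \right\rfloor + 1$ colors contains a rainbow subgraph isomorphic to $F_t$; that is, \[ \mathrm{rb}(W_d, F_t) \le \left\lfloor \frac{2t-5}{t-2}\, d \right\rfloor + 1 . \]
   Context: A subgraph of an edge-colored graph is rainbow if no two of its edges have the same color. For graphs $G$ and $H$, the rainbow number $\mathrm{rb}(G,H)$ is the minimum integer $k$ such that every edge-coloring of $G$ that uses at least $k$ distinct colors contains a rainbow subgraph isomorphic to $H$. $W_d$ is the wheel: a hub vertex adjacent to all vertices of a cycle $v_1\cdots v_dv_1$. The fan $F_t$ is obtained from a cycle $v_1v_2\cdots v_tv_1$ by adding all chords $v_1v_i$, $3 \le i \le t-1$. *)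

From mathcomp Require Import all_boot.
Set Implicit Arguments. Unset Strict Implicit. Unset Printing Implicit Defensive.

(* Wheel W_d: vertex None is the hub, Some i (i : 'I_d) is cycle vertex v_{i+1};
   cycle edges v_i v_{i+1 mod d}; the hub is adjacent to every cycle vertex. *)
Definition wheel_adj (d : nat) : rel (option 'I_d) :=
  fun x y => match x, y with
  | None, None => false
  | None, Some _ | Some _, None => true
  | Some i, Some j => (val j == (val i).+1 %% d) || (val i == (val j).+1 %% d)
  end.

(* Fan F_t on 'I_t (vertex k stands for v_{k+1}): cycle v_1 ... v_t v_1 plus
   chords v_1 v_i (3 <= i <= t-1); i.e. vertex 0 adjacent to all others plus
   the path edges k (k+1) for all k. *)
Definition fan_adj (t : nat) : rel 'I_t :=
  fun i j => (i != j) &&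
    [|| val i == 0, val j == 0, (val i).+1 == val j | (val j).+1 == val i].

(* An edge-coloring of a graph on V assigns a color to each edge, edges being
   represented as 2-element sets {x, y}. *)
Definition colors_used (V : finType) (adj : rel V) (c : {set V} -> nat) : seq nat :=
  undup [seq c [set p.1; p.2] | p <- enum [pred p : V * V | adj p.1 p.2]].

Definition num_colors (V : finType) (adj : rel V) (c : {set V} -> nat) : nat :=
  size (colors_used adj c).

Definition has_rainbow_copy (W V : finType) (hadj : rel W) (adj : rel V)
    (c : {set V} -> nat) : Prop :=
  exists f : W -> V,
    [/\ injective f,
        (forall i j, hadj i j -> adj (f i) (f j)) &
        (forall i j k l, hadj i j -> hadj k l ->
           c [set f i; f j] = c [set f k; f l] -> [set i; j] = [set k; l])].

From mathcomp Require Import all_boot zify.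
Set Implicit Arguments. Unset Strict Implicit. Unset Printing Implicit Defensive.

(* Number the 2d edges of W_d cyclically: the spoke to the j-th rim vertex at
   position 2j and the rim edge leaving it at 2j+1.  A copy of F_t whose path
   runs along consecutive rim vertices then uses exactly the 2t-3 positions of
   a window starting at an even position, so it suffices that one of the d
   such windows is rainbow.  Otherwise every window contains an arc from a
   position to the next one of the same color of length at most 2(t-2); such
   an arc lies in at most t-2 windows, and since the arcs of a color class
   cover the cycle, a class of m <= d-(t-2) positions contributes at most
   (m-1)(t-2) arc-window incidences (a larger class alone has (m-1)(t-2) >= d).
   Hence d <= (2d - #colors)(t-2), contradicting the number of colors. *)

Lemma card_le_sum_cover (I J : finType) (P : pred J) (A : J -> {set I}) :
  (forall x, exists2 j, P j & x \in A j) -> #|I| <= \sum_(j | P j) #|A j|.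
Proof.
move=> covered; rewrite -cardsT.
apply: (@leq_trans #|\bigcup_(j | P j) A j|).
  apply/subset_leq_card/subsetP => x _.
  by have [j Pj Ax] := covered x; apply/bigcupP; exists j.
elim/big_rec2: _ => [|j n U _ leUn]; first by rewrite cards0.
by rewrite (leq_trans (leq_card_setU _ _).1) ?leq_add2l.
Qed.

Section CyclicColoring.

Variables (N : nat) (col : nat -> nat).
Hypothesis N_gt0 : 0 < N.
Hypothesis col_mod : forall x, col (x %% N) = col x.

Lemma col_eqmod x y : x = y %[mod N] -> col x = col y.
Proof. by move=> Exy; rewrite -col_mod Exy col_mod. Qed.

Definition palette : seq nat := undup [seq col p | p : 'I_N].

Lemma mem_palette (p : 'I_N) : col p \in palette.
Proof. by rewrite mem_undup; apply: map_f; rewrite mem_enum. Qed.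

Lemma size_palette : size palette <= N.
Proof. by rewrite (leq_trans (size_undup _)) // size_map size_enum_ord. Qed.

Lemma big_palette F :
  \sum_(a <- palette) \sum_(p < N | col p == a) F p = \sum_(p < N) F p.
Proof.
under eq_bigr => a _ do rewrite big_mkcond /=.
rewrite exchange_big /=; apply: eq_bigr => p _.
rewrite -big_mkcond /= -big_filter.
have -> : [seq a <- palette | col p == a] = [:: col p].
  rewrite -(filter_pred1_uniq (undup_uniq _) (mem_palette p)).
  by apply: eq_filter => a; rewrite /= eq_sym.
by rewrite big_seq1.
Qed.

Definition class_size a := #|[set p : 'I_N | col p == a]|.

Lemma sum_class_const a n : \sum_(p < N | col p == a) n = class_size a * n.
Proof. by rewrite -sum_nat_const; apply: eq_bigl => p; rewrite inE. Qed.

Lemma class_size_gt0 a : a \in palette -> 0 < class_size a.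
Proof.
rewrite mem_undup => /mapP[p _ ->]; apply/card_gt0P; exists p; by rewrite inE.
Qed.

Lemma sum_class_size_sub1 : \sum_(a <- palette) (class_size a - 1) = N - size palette.
Proof.
have sizeN : \sum_(a <- palette) class_size a = N.
  under eq_big_seq => a _ do rewrite -[class_size a]muln1 -sum_class_const.
  by rewrite big_palette sum1_card card_ord.
rewrite big_seq sumnB => [|a /class_size_gt0 //].
by rewrite -!big_seq sizeN sum1_size.
Qed.

Lemma gap_subproof p : exists g, (0 < g) && (col (p + g) == col p).
Proof. by exists N; rewrite N_gt0 /=; apply/eqP/col_eqmod; rewrite modnDr. Qed.

Definition gap p := ex_minn (gap_subproof p).

Lemma gap_gt0 p : 0 < gap p.
Proof. by rewrite /gap; case: ex_minnP => g /andP[]. Qed.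

Lemma col_gap p : col (p + gap p) = col p.
Proof. by rewrite /gap; case: ex_minnP => g /andP[_ /eqP]. Qed.

Lemma gap_min p g : 0 < g -> col (p + g) = col p -> gap p <= g.
Proof.
move=> g_gt0 Eg; rewrite /gap; case: ex_minnP => m _; apply.
by rewrite g_gt0 Eg eqxx.
Qed.

Lemma gap_mod p : gap (p %% N) = gap p.
Proof.
apply: eq_ex_minn => g; congr (_ && (_ == _)); apply: col_eqmod.
  by rewrite modnDml.
by rewrite modn_mod.
Qed.

Definition arc p : {set 'I_N} :=
  [set Ordinal (ltn_pmod (p + e) N_gt0) | e : 'I_(gap p)].

Lemma card_arc p : #|arc p| <= gap p.
Proof. by rewrite (leq_trans (leq_imset_card _ _)) ?card_ord. Qed.

Lemma arc_cover a (p0 : 'I_N) (q : 'I_N) :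
  col p0 = a -> exists2 p : 'I_N, col p == a & q \in arc p.
Proof.
move=> Ep0.
have ex_r : exists r, (r <= q + N) && (col r == a).
  by exists p0; rewrite Ep0 eqxx andbT; have := ltn_ord p0; lia.
have ub_r r : (r <= q + N) && (col r == a) -> r <= q + N by case/andP.
have [r /andP[le_r /eqP Er] r_max] := ex_maxnP ex_r ub_r.
exists (Ordinal (ltn_pmod r N_gt0)); first by rewrite /= col_mod Er.
have lt_q : q + N - r < gap (r %% N).
  rewrite gap_mod ltnNge; apply/negP => le_gap.
  have := r_max (r + gap r); rewrite col_gap Er eqxx andbT.
  by have := gap_gt0 r; lia.
apply/imsetP; exists (Ordinal lt_q) => //; apply: val_inj => /=.
by rewrite modnDml addnBCA // subnn addn0 modnDr modn_small.
Qed.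

Lemma sum_gap_class a : a \in palette -> N <= \sum_(p < N | col p == a) gap p.
Proof.
rewrite mem_undup => /mapP[p0 _ ->].
apply: (@leq_trans (\sum_(p < N | col p == col p0) #|arc p|)).
  by rewrite -[X in X <= _]card_ord; apply/card_le_sum_cover => q; apply: arc_cover.
by apply: leq_sum => p _; apply: card_arc.
Qed.

End CyclicColoring.

Section Windows.

Variables (d T : nat) (col : nat -> nat).
Hypotheses (T_ge2 : 2 <= T) (T_le : 2 * T <= d).
Hypothesis col_mod : forall x, col (x %% (2 * d)) = col x.

Local Notation N := (2 * d).

Let N_gt0 : 0 < N. Proof. lia. Qed.

Local Notation gap := (gap N_gt0 col_mod).

(* Windows start at even positions, so an arc of length g <= 2T starts at an
   offset j <= 2T - g of fixed parity in each window containing it. *)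
Definition windows_bound g := if g <= 2 * T then (2 * T - g)./2.+1 else 0.

Lemma windows_bound_le g : 0 < g -> windows_bound g <= T.
Proof.
rewrite /windows_bound; case: ifP => // _ g_gt0.
by have := odd_double_half (2 * T - g); rewrite -muln2; case: odd => /=; lia.
Qed.

Lemma windows_bound_short g : g <= 2 * T -> 2 * windows_bound g + g <= 2 * T + 2.
Proof.
move=> le_g; rewrite /windows_bound le_g.
by have := odd_double_half (2 * T - g); rewrite -muln2; case: odd => /=; lia.
Qed.

Definition arc_windows (p : 'I_N) : {set 'I_d} :=
  [set i : 'I_d | [exists j : 'I_(2 * T).+1,
                    (j + gap p <= 2 * T) && ((2 * i + j) %% N == p)]].

Lemma arc_windows_repeat (i : 'I_d) j1 j2 :
  j1 < j2 -> j2 <= 2 * T -> col (2 * i + j1) = col (2 * i + j2) ->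
  exists p : 'I_N, i \in arc_windows p.
Proof.
move=> lt_j12 le_j2 Ecol.
exists (Ordinal (ltn_pmod (2 * i + j1) N_gt0)); rewrite inE.
have lt_j1 : j1 < (2 * T).+1 by lia.
apply/existsP; exists (Ordinal lt_j1); rewrite /= eqxx andbT.
suff : gap (2 * i + j1) <= j2 - j1 by rewrite /= gap_mod; lia.
apply: gap_min; first lia.
by rewrite -addnA subnKC ?(ltnW lt_j12).
Qed.

Lemma card_arc_windows p : #|arc_windows p| <= windows_bound (gap p).
Proof.
rewrite /windows_bound; case: (leqP (gap p) (2 * T)) => [le_gap | lt_gap]; last first.
  rewrite leqn0 cards_eq0; apply/eqP/setP => i; rewrite !inE.
  by apply/existsP => -[j /andP[le_j _]]; lia.
pose offset (i : 'I_d) := (p + N - 2 * i) %% N.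
have offsetP (i : 'I_d) : i \in arc_windows p -> [/\ offset i + gap p <= 2 * T,
    odd (offset i) = odd p & (2 * i + offset i) %% N = p].
  rewrite inE => /existsP[j /andP[le_j /eqP Ep]].
  have lt_i := ltn_ord i; have lt_j := ltn_ord j.
  have -> : offset i = j.
    rewrite /offset -Ep -addnBA; last lia.
    rewrite modnDml (addnC (2 * i)) -addnA subnKC; last lia.
    by rewrite modnDr modn_small //; lia.
  split=> //; rewrite -Ep odd_mod; last by rewrite mul2n odd_double.
  by rewrite oddD (mul2n i) odd_double.
pose half_offset (i : 'I_d) : 'I_((2 * T - gap p)./2).+1 := inord (offset i)./2.
have half_offsetE i : i \in arc_windows p -> half_offset i = (offset i)./2 :> nat.
  by case/offsetP=> le_i _ _; rewrite inordK // ltnS half_leq //; lia.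
rewrite -(@card_in_imset _ _ half_offset (arc_windows p)); last first.
  move=> i1 i2 i1p i2p /(congr1 (@nat_of_ord _)); rewrite !half_offsetE //.
  move: i1p i2p => /offsetP[le1 odd1 E1] /offsetP[le2 odd2 E2].
  move/(congr1 (fun h => odd p + h.*2)).
  rewrite -{1}odd1 -odd2 !odd_double_half => Eoffset.
  have lt_i1 := ltn_ord i1; have lt_i2 := ltn_ord i2.
  move: E1; rewrite Eoffset -{}E2 => /eqP; rewrite eqn_modDr !modn_small; try lia.
  by move=> /eqP E; apply: ord_inj; lia.
by rewrite (leq_trans (max_card _)) ?card_ord.
Qed.

Local Notation palette := (palette N col).
Local Notation class_size := (class_size N col).

(* An arc longer than 2T lies in no window; if there is none, the arcs of the
   class cover the cycle, so their lengths sum to at least 2d. *)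
Lemma sum_class_windows a : a \in palette -> class_size a <= d - T ->
  \sum_(p < N | col p == a) windows_bound (gap p) <= (class_size a - 1) * T.
Proof.
move=> a_col small_a; have class_gt0 := class_size_gt0 a_col.
case: (boolP [exists p : 'I_N, (col p == a) && (2 * T < gap p)]).
  case/existsP => p1 /andP[col_p1 long_p1].
  suff : \sum_(p < N | col p == a) windows_bound (gap p) + T <= class_size a * T.
    by rewrite mulnBl mul1n; lia.
  rewrite -sum_class_const (bigD1 p1) //= [X in _ <= X](bigD1 p1) //=.
  rewrite {1}/windows_bound ifN -?ltnNge // add0n addnC leq_add2l.
  by apply: leq_sum => p _; apply/windows_bound_le/gap_gt0.
move/existsPn => all_short.
have : \sum_(p < N | col p == a) (2 * windows_bound (gap p) + gap p)
         <= \sum_(p < N | col p == a) (2 * T + 2).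
  apply: leq_sum => p col_p; apply: windows_bound_short.
  by have := all_short p; rewrite col_p -leqNgt.
rewrite big_split -big_distrr /= sum_class_const mulnDr (mulnCA _ 2 T) mulnBl mul1n.
move: (sum_gap_class N_gt0 col_mod a_col) small_a class_gt0.
set G := \sum_(p < N | _) gap p; set S := \sum_(p < N | _) windows_bound _.
lia.
Qed.

Lemma repeating_windows_deficit :
  (forall i, i < d -> exists j1 j2,
     [/\ j1 < j2, j2 <= 2 * T & col (2 * i + j1) = col (2 * i + j2)]) ->
  d <= (N - size palette) * T.
Proof.
move=> repeats; rewrite -sum_class_size_sub1 big_distrl /=.
case: (boolP (has (fun a => d - T < class_size a) palette)).
  case/hasP => a a_col large_a.
  apply: (@leq_trans ((class_size a - 1) * T)).
    have := leq_mul (leqnn (d - T)) T_ge2.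
    have : (d - T) * T <= (class_size a - 1) * T by rewrite leq_mul2r; lia.
    lia.
  by rewrite (bigD1_seq a) ?undup_uniq //= leq_addr.
move/hasPn => all_small.
apply: (@leq_trans (\sum_(p < N) #|arc_windows p|)).
  rewrite -[X in X <= _]card_ord; apply: card_le_sum_cover => i.
  have [j1 [j2 [lt_j12 le_j2 Ecol]]] := repeats i (ltn_ord i).
  by have [p ip] := arc_windows_repeat lt_j12 le_j2 Ecol; exists p.
apply: (@leq_trans (\sum_(p < N) windows_bound (gap p))).
  by apply: leq_sum => p _; apply: card_arc_windows.
rewrite -(big_palette col) big_seq [X in _ <= X]big_seq; apply: leq_sum => a a_col.
by apply: sum_class_windows; rewrite // leqNgt all_small.
Qed.

End Windows.

Section WheelEdges.

Variable d' : nat.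
Local Notation d := d'.+1.

Definition wheel_edge (p : nat) : {set option 'I_d} :=
  if odd p then [set Some (inord (p./2 %% d)); Some (inord (p./2.+1 %% d))]
  else [set None; Some (inord (p./2 %% d))].

Lemma wheel_edge_spoke x : wheel_edge (2 * x) = [set None; Some (inord (x %% d))].
Proof. by rewrite /wheel_edge mul2n odd_double doubleK. Qed.

Lemma wheel_edge_rim x :
  wheel_edge (2 * x + 1) = [set Some (inord (x %% d)); Some (inord (x.+1 %% d))].
Proof. by rewrite /wheel_edge addn1 mul2n oddS odd_double /= uphalf_double. Qed.

Lemma wheel_edge_mod p : wheel_edge (p %% (2 * d)) = wheel_edge p.
Proof.
rewrite [in RHS](divn_eq p (2 * d)) /wheel_edge oddD !oddM andbF /=.
have -> : (p %/ (2 * d) * (2 * d) + p %% (2 * d))./2 =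
          p %/ (2 * d) * d + (p %% (2 * d))./2.
  by rewrite mulnA [_ * 2]mulnC -mulnA mul2n halfD odd_double doubleK.
by rewrite -addnS !modnMDl.
Qed.

Lemma wheel_edge_of_adj x y :
  wheel_adj x y -> exists p : 'I_(2 * d), [set x; y] = wheel_edge p.
Proof.
have inord_mod (j : 'I_d) : inord (j %% d) = j.
  by apply: val_inj; rewrite /= modn_small ?inordK.
have spoke (j : 'I_d) : exists p : 'I_(2 * d), [set None; Some j] = wheel_edge p.
  have lt_p : 2 * j < 2 * d by rewrite ltn_pmul2l.
  by exists (Ordinal lt_p); rewrite wheel_edge_spoke inord_mod.
have rim (j k : 'I_d) : val k = j.+1 %% d ->
    exists p : 'I_(2 * d), [set Some j; Some k] = wheel_edge p.
  have lt_p : 2 * j + 1 < 2 * d by have := ltn_ord j; lia.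
  move=> Ek; exists (Ordinal lt_p); rewrite wheel_edge_rim inord_mod -Ek.
  by congr [set _; Some _]; apply: val_inj; rewrite /= inordK.
case: x y => [j|] [k|] //= adj_jk; last by rewrite setUC.
by case/orP: adj_jk => /eqP Ek; [|rewrite setUC]; apply: rim.
Qed.

Variable c : {set option 'I_d} -> nat.

Definition wheel_col p := c (wheel_edge p).

Lemma wheel_col_mod p : wheel_col (p %% (2 * d)) = wheel_col p.
Proof. by rewrite /wheel_col wheel_edge_mod. Qed.

Lemma num_colors_wheel_le :
  num_colors (@wheel_adj d) c <= size (palette (2 * d) wheel_col).
Proof.
apply: uniq_leq_size; first exact: undup_uniq.
move=> a; rewrite mem_undup => /mapP[[x y]]; rewrite mem_enum /= => adj_xy ->.
by have [p ->] := wheel_edge_of_adj adj_xy; apply: mem_palette.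
Qed.

End WheelEdges.

Section FanInWheel.

Variable t : nat.

Lemma fan_adjE (k l : 'I_t) : fan_adj k l =
  [&& k != l :> nat & [|| k == 0 :> nat, l == 0 :> nat, k.+1 == l | l.+1 == k]].
Proof. by []. Qed.

(* Offset, in the window at position 2i, of the image of the fan edge kl. *)
Definition fan_offset (k l : nat) : nat :=
  if k == 0 then 2 * (l - 1) else if l == 0 then 2 * (k - 1) else 2 * (minn k l - 1) + 1.

Lemma fan_offset_le (k l : 'I_t) : fan_adj k l -> fan_offset k l <= 2 * (t - 2).
Proof.
rewrite fan_adjE /fan_offset; have := ltn_ord k; have := ltn_ord l.
by case: (k =P 0 :> nat); case: (l =P 0 :> nat); lia.
Qed.

Lemma fan_offset_inj (k l k' l' : 'I_t) : fan_adj k l -> fan_adj k' l' ->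
  fan_offset k l = fan_offset k' l' -> [set k; l] = [set k'; l'].
Proof.
move=> adj adj' Eoff.
suff [[-> ->]|[-> ->]] : (k = k' /\ l = l') \/ (k = l' /\ l = k') by [|rewrite setUC].
suff : (k = k' :> nat /\ l = l' :> nat) \/ (k = l' :> nat /\ l = k' :> nat).
  by case=> -[/val_inj-> /val_inj->]; [left|right].
move: adj adj' Eoff; rewrite !fan_adjE /fan_offset.
by case: (k =P 0 :> nat); case: (l =P 0 :> nat); case: (k' =P 0 :> nat);
  case: (l' =P 0 :> nat); lia.
Qed.

Variables (d' : nat) (c : {set option 'I_d'.+1} -> nat) (i : nat).
Local Notation d := d'.+1.
Hypothesis t_le : t <= d.+1.

Definition fan_embedding (k : 'I_t) : option 'I_d :=
  if k == 0 :> nat then None else Some (inord ((i + k - 1) %% d)).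

Lemma fan_embedding_inj : injective fan_embedding.
Proof.
move=> k1 k2; rewrite /fan_embedding; have := ltn_ord k1; have := ltn_ord k2.
case: (k1 =P 0 :> nat); case: (k2 =P 0 :> nat) => //.
  by move=> *; apply: ord_inj; lia.
move=> nz2 nz1 lt2 lt1 [/(congr1 (@nat_of_ord _))].
rewrite !inordK ?ltn_pmod // -!addnBA; try lia.
move/eqP; rewrite eqn_modDl !modn_small; try lia.
by move/eqP=> Ek; apply: ord_inj; lia.
Qed.

Lemma fan_embedding_adj (k l : 'I_t) :
  fan_adj k l -> wheel_adj (fan_embedding k) (fan_embedding l).
Proof.
rewrite fan_adjE /fan_embedding => adj_kl.
case: (k =P 0 :> nat) => [k0|nz_k]; case: (l =P 0 :> nat) => [l0|nz_l] //=; first lia.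
have modSmod x : (x %% d).+1 %% d = x.+1 %% d by rewrite -addn1 modnDml addn1.
rewrite !inordK ?ltn_pmod // !modSmod.
have [El|Ek] : i + l - 1 = (i + k - 1).+1 \/ i + k - 1 = (i + l - 1).+1 by lia.
  by rewrite El eqxx.
by rewrite Ek eqxx orbT.
Qed.

Lemma fan_embedding_edge (k l : 'I_t) : fan_adj k l ->
  [set fan_embedding k; fan_embedding l] = wheel_edge d' (2 * i + fan_offset k l).
Proof.
rewrite fan_adjE /fan_embedding /fan_offset => adj_kl.
case: (k =P 0 :> nat) => [k0|nz_k]; case: (l =P 0 :> nat) => [l0|nz_l]; first lia.
- have -> : 2 * i + 2 * (l - 1) = 2 * (i + l - 1) by lia.
  by rewrite wheel_edge_spoke.
- have -> : 2 * i + 2 * (k - 1) = 2 * (i + k - 1) by lia.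
  by rewrite wheel_edge_spoke setUC.
have [El|Ek] : l = k.+1 :> nat \/ k = l.+1 :> nat by lia.
  have -> : 2 * i + (2 * (minn k l - 1) + 1) = 2 * (i + k - 1) + 1 by lia.
  by rewrite wheel_edge_rim; have -> : i + l - 1 = (i + k - 1).+1 by lia.
have -> : 2 * i + (2 * (minn k l - 1) + 1) = 2 * (i + l - 1) + 1 by lia.
by rewrite wheel_edge_rim setUC; have -> : i + k - 1 = (i + l - 1).+1 by lia.
Qed.

Lemma rainbow_window_fan :
  (forall j1 j2, j1 <= 2 * (t - 2) -> j2 <= 2 * (t - 2) ->
     wheel_col c (2 * i + j1) = wheel_col c (2 * i + j2) -> j1 = j2) ->
  has_rainbow_copy (@fan_adj t) (@wheel_adj d) c.
Proof.
move=> window_rainbow; exists fan_embedding; split.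
- exact: fan_embedding_inj.
- exact: fan_embedding_adj.
move=> k l k' l' adj adj'; rewrite !fan_embedding_edge // => Ecol.
by apply: fan_offset_inj; rewrite // (window_rainbow _ _ _ _ Ecol) ?fan_offset_le.
Qed.

End FanInWheel.

Lemma rainbow_window_or_repeats (col : nat -> nat) (d L : nat) :
  (exists i, forall j1 j2, j1 <= L -> j2 <= L ->
     col (2 * i + j1) = col (2 * i + j2) -> j1 = j2) \/
  (forall i, i < d -> exists j1 j2,
     [/\ j1 < j2, j2 <= L & col (2 * i + j1) = col (2 * i + j2)]).
Proof.
case: (boolP [exists i : 'I_d, [forall j1 : 'I_L.+1, forall j2 : 'I_L.+1,
                (col (2 * i + j1) == col (2 * i + j2)) ==> (j1 == j2)]]).
  case/existsP => i /forallP window_rainbow; left; exists i => j1 j2 le_j1 le_j2 Ecol.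
  have /forallP/(_ (Ordinal (le_j2 : j2 < L.+1))) :=
    window_rainbow (Ordinal (le_j1 : j1 < L.+1)).
  by rewrite /= Ecol eqxx => /eqP[].
move/existsPn => no_rainbow; right => i lt_i.
have /forallPn[j1 /forallPn[j2]] := no_rainbow (Ordinal lt_i).
rewrite negb_imply => /andP[/eqP Ecol ne_j12]; have := ltn_ord j1; have := ltn_ord j2.
case: (ltngtP j1 j2) => [lt_j12|lt_j21|/val_inj eq_j12] lt2 lt1.
- by exists j1, j2; split.
- by exists j2, j1; split.
- by rewrite eq_j12 eqxx in ne_j12.
Qed.

Lemma leq_div_of_deficit (K d T : nat) :
  0 < T -> K <= 2 * d -> d <= (2 * d - K) * T -> K <= ((2 * T - 1) * d) %/ T.
Proof. by move=> T_gt0 K_le; rewrite leq_divRL // !mulnBl; nia. Qed.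

Theorem theorem3p1 (d t : nat) :
  4 <= t -> 3 * t - 5 <= d ->
  forall c : {set option 'I_d} -> nat,
    ((2 * t - 5) * d) %/ (t - 2) + 1 <= num_colors (@wheel_adj d) c ->
    has_rainbow_copy (@fan_adj t) (@wheel_adj d) c.
Proof.
move=> t_ge4; case: d => [|d] d_ge c many_colors; first lia.
have [[i window_rainbow]|repeats] :=
  rainbow_window_or_repeats (wheel_col c) d.+1 (2 * (t - 2)).
  by apply: rainbow_window_fan window_rainbow; lia.
have T_ge2 : 2 <= t - 2 by lia.
have T_le : 2 * (t - 2) <= d.+1 by lia.
have deficit := repeating_windows_deficit T_ge2 T_le (wheel_col_mod c) repeats.
have := leq_div_of_deficit (ltnW T_ge2) (size_palette _ _) deficit.
have -> : 2 * (t - 2) - 1 = 2 * t - 5 by lia.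
by have := num_colors_wheel_le c; lia.
Qed.
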